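(* A pattern $P\in\{0,1\}^{k\times\ell}$ that avoids $D_2$ or avoids $\overline{D}_2$ is row-bounding, i.e., $\mathrm{Av}(P)$ is row-bounded.
   Context: All matrices are binary; rows numbered top to bottom, columns left to right; $(i,j)$ is the entry in row $i$, column $j$; $(a,b]=\{a+1,\dots,b\}$. $D_2\in\{0,1\}^{2\times2}$ has 1-entries exactly at $(1,1),(2,2)$; $\overline D_2$ has 1-entries exactly at $(1,2),(2,1)$. A pattern $P\in\{0,1\}^{k\times\ell}$ is an interval minor of $M\in\{0,1\}^{m\times n}$ if there are integers $0=r_0<\dots<r_k=m$ and $0=c_0<\dots<c_\ell=n$ such that for each 1-entry $(i,j)$ of $P$ the submatrix of $M$ on rows $(r_{i-1},r_i]$ and columns $(c_{j-1},c_j]$ contains a 1-entry; otherwise $M$ avoids $P$. $\mathrm{Av}(P)$ is the set of binary matrices avoiding $P$. $M\in\mathrm{Av}(P)$ is critical if changing any single 0-entry of $M$ to a 1-entry produces a matrix containing $P$. A horizontal 0-run is a maximal set of consecutive 0-entries within one row; the complexity of a row is the number of such runs. $\mathrm{Av}(P)$ is row-bounded (and $P$ row-bounding) if there is a constant bounding the complexity of every row of every critical matrix in $\mathrm{Av}(P)$. *)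

(* Binary matrices are 'M[bool]_(m, n); entries are 0-indexed
   ('I_m, 'I_n), so paper row i (1-based) is index i-1 here. *)
From mathcomp Require Import all_boot all_algebra.
Set Implicit Arguments. Unset Strict Implicit. Unset Printing Implicit Defensive.

Definition is_cut (k m : nat) (r : nat -> nat) : Prop :=
  r 0 = 0 /\ r k = m /\ (forall i, i < k -> r i < r i.+1).

(* P is an interval minor of M. Block i (0-based) consists of the 0-based rows
   a with r i <= a < r (i+1), i.e. the 1-based rows (r_i, r_{i+1}]. *)
Definition contains (k l m n : nat) (P : 'M[bool]_(k, l)) (M : 'M[bool]_(m, n)) : Prop :=
  exists (r c : nat -> nat), is_cut k m r /\ is_cut l n c /\
    forall (i : 'I_k) (j : 'I_l), P i j ->
      exists (a : 'I_m) (b : 'I_n),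
        [/\ r i <= a < r i.+1, c j <= b < c j.+1 & M a b].

Definition avoids (k l m n : nat) (P : 'M[bool]_(k, l)) (M : 'M[bool]_(m, n)) : Prop :=
  ~ contains P M.

Definition D2 : 'M[bool]_(2, 2) := \matrix_(i < 2, j < 2) (i == j :> nat).
Definition D2bar : 'M[bool]_(2, 2) := \matrix_(i < 2, j < 2) (i + j == 1).

Definition set_one (m n : nat) (M : 'M[bool]_(m, n)) (a : 'I_m) (b : 'I_n) : 'M[bool]_(m, n) :=
  \matrix_(i, j) (M i j || ((i == a) && (j == b))).

Definition critical (k l m n : nat) (P : 'M[bool]_(k, l)) (M : 'M[bool]_(m, n)) : Prop :=
  avoids P M /\ forall (a : 'I_m) (b : 'I_n), M a b = false -> contains P (set_one M a b).

(* number of maximal runs of consecutive false entries in a sequence: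
   count the positions i holding a 0 that either start the row or follow a 1 *)
Definition zero_runs (s : seq bool) : nat :=
  count (fun i => ~~ nth true s i && ((i == 0) || nth false s i.-1)) (iota 0 (size s)).

Definition row_complexity (m n : nat) (M : 'M[bool]_(m, n)) (a : 'I_m) : nat :=
  zero_runs [seq M a j | j <- enum 'I_n].

Definition row_bounded (k l : nat) (P : 'M[bool]_(k, l)) : Prop :=
  exists C : nat, forall (m n : nat) (M : 'M[bool]_(m, n)),
    critical P M -> forall a : 'I_m, row_complexity M a <= C.

From mathcomp Require Import all_boot all_algebra zify.
Set Implicit Arguments. Unset Strict Implicit. Unset Printing Implicit Defensive.

(* Flipping the rows turns D2bar into D2, so let P avoid D2 and let M be critical.
   Turning a 0-entry (a, z) of M into a 1 creates a copy of P that must use the new 1: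
   (a, z) lies in a block (i, j) with P i j = 1 in which row a has no other 1.
   Suppose two zero runs of row a, starting at z1 < z2, get the same block row i, and
   row a has at least l ones between z1 and z2.  Glue the two copies: rows above i
   from the second, rows below i from the first, and the ones of row i of P realised
   by distinct ones of row a between z1 and z2.  This is a copy of P in M, because
   D2-avoidance puts the ones of P above row i to the right of those of row i, and
   the ones below row i to their left.  Hence labelling a run start by its block row
   and by the number of preceding ones modulo l + 1 is injective, and every row of M
   has at most k * (l + 1) zero runs. *)

Section Cuts.
Variables (k m : nat) (r : nat -> nat).
Hypothesis r_cut : is_cut k m r.

Lemma cut_le i j : i <= j <= k -> r i <= r j.
Proof.
case: r_cut => _ [_ r_incr] /andP[]; elim: j => [|j IH]; first by rewrite leqn0 => /eqP->.
rewrite leq_eqVlt => /orP[/eqP-> //|ij] jk.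
by have := IH ij (ltnW jk); have := r_incr j jk; lia.
Qed.

Lemma cut_lt i j : i < j <= k -> r i < r j.
Proof.
case/andP=> ij jk; have [_ [_ r_incr]] := r_cut.
by have := cut_le (i := i.+1) (j := j); have := r_incr i (leq_trans ij jk); lia.
Qed.

Lemma cut_le_top i : i <= k -> r i <= m.
Proof. by case: r_cut => _ [<- _] ik; apply: cut_le; rewrite ik leqnn. Qed.

End Cuts.

Definition splice (f g : nat -> nat) (x t : nat) := if t <= x then f t else g t.

Lemma splice_cut k m f g x : is_cut k m f -> is_cut k m g -> x < k -> f x < g x.+1 ->
  is_cut k m (splice f g x).
Proof.
move=> [f0 [_ f_incr]] [_ [gk g_incr]] xk fg; rewrite /is_cut /splice leq0n f0.
split=> //; split; first by rewrite leqNgt xk.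
move=> t tk; case: (ltngtP t x) => [_|_|->] //; [exact: f_incr | exact: g_incr].
Qed.

Lemma size_le_card_of_rel (X : eqType) (T : finType) (R : X -> T -> Prop) (s : seq X) :
  uniq s -> (forall x, x \in s -> exists t, R x t) ->
  (forall x y t, x \in s -> y \in s -> R x t -> R y t -> x = y) -> size s <= #|T|.
Proof.
suff: forall A : {set T}, uniq s -> (forall x, x \in s -> exists2 t, t \notin A & R x t) ->
    (forall x y t, x \in s -> y \in s -> R x t -> R y t -> x = y) -> size s <= #|~: A|.
  move=> /(_ set0) gen s_uniq s_lab s_inj; rewrite -(cardsC set0) cards0.
  by apply: gen => // x /s_lab[t]; exists t; rewrite ?inE.
elim: s => [|x s IH] A //= /andP[xs s_uniq] s_lab s_inj.
have [t tA Rxt] := s_lab x (mem_head x s).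
have sub : {subset s <= x :: s} by move=> y ys; rewrite inE ys orbT.
have : size s <= #|~: (t |: A)|.
  apply: IH => // [y ys|y z u ys zs]; last exact: s_inj (sub y ys) (sub z zs).
  have [u uA Ryu] := s_lab y (sub y ys).
  exists u => //; rewrite !inE negb_or uA andbT; apply: contraNneq xs => ut.
  by rewrite -(s_inj y x u (sub y ys) (mem_head x s)) // ut.
have := cardsC A; have := cardsC (t |: A); rewrite cardsU1 tA; lia.
Qed.

Lemma leq_of_eqn_mod_add d x e : 0 < e -> x + e = x %[mod d] -> d <= e.
Proof. by move=> e0 /eqP; rewrite eqn_mod_dvd ?leq_addr // addKn; apply: dvdn_leq. Qed.

Section ColumnSplice.
Variables (l n lo hi : nat) (cL cR : nat -> nat) (s : seq nat).
Hypotheses (cL_cut : is_cut l n cL) (cR_cut : is_cut l n cR).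
Hypotheses (lo_hi : lo <= hi) (hi_l : hi < l).
Hypotheses (s_sorted : sorted ltn s) (s_size : hi - lo < size s).
Hypothesis s_range : forall w, w \in s -> cL lo.+1 <= w < cR hi.

Definition splice_cols := splice cL (splice (fun t => nth 0 s (t - lo)) cR hi) lo.

Let nth_lt t1 t2 : t1 < t2 < size s -> nth 0 s t1 < nth 0 s t2.
Proof.
by case/andP=> t12 t2s; apply: (sorted_ltn_nth ltn_trans); rewrite ?inE // (ltn_trans t12).
Qed.

Let nth_range t : t < size s -> cL lo.+1 <= nth 0 s t < cR hi.
Proof. by move=> ts; apply: s_range; exact: mem_nth. Qed.

Let cL_step t : t < l -> cL t < cL t.+1. Proof. by case: cL_cut => _ [_ /(_ t)]. Qed.
Let cR_step t : t < l -> cR t < cR t.+1. Proof. by case: cR_cut => _ [_ /(_ t)]. Qed.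

Let splice_colsL j : j <= lo -> splice_cols j = cL j.
Proof. by rewrite /splice_cols /splice => ->. Qed.

Let splice_colsM j : lo < j <= hi -> splice_cols j = nth 0 s (j - lo).
Proof. by case/andP=> loj jhi; rewrite /splice_cols /splice leqNgt loj jhi. Qed.

Let splice_colsR j : hi < j -> splice_cols j = cR j.
Proof.
move=> hij; rewrite /splice_cols /splice leqNgt (leq_ltn_trans lo_hi hij) /=.
by rewrite leqNgt hij.
Qed.

Let splice_cols_lo_succ : cL lo.+1 <= splice_cols lo.+1.
Proof.
have /andP[w0_lo w0_hi] := nth_range (t := 0) ltac:(lia).
have [lohi|] := ltnP lo hi.
- rewrite splice_colsM ?leqnn ?lohi // subSnn.
  by have := nth_lt (t1 := 0) (t2 := 1) ltac:(lia); lia.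
- move=> hilo; have hilo' : hi = lo by lia.
  by rewrite splice_colsR -hilo' // in w0_lo w0_hi *; have := cR_step hi_l; lia.
Qed.

Let splice_cols_hi : splice_cols hi <= cR hi.
Proof.
have [lohi|] := ltnP lo hi.
- by rewrite splice_colsM ?lohi //; have /andP[] := nth_range (t := hi - lo) s_size; lia.
- move=> hilo; have hilo' : hi = lo by lia.
  have /andP[w0_lo w0_hi] := nth_range (t := 0) ltac:(lia).
  rewrite splice_colsL -hilo' // in w0_lo w0_hi *.
  by have := cut_lt cL_cut (i := hi) (j := hi.+1) ltac:(lia); lia.
Qed.

Lemma splice_cols_cut : is_cut l n splice_cols.
Proof.
have [cL0 [_ _]] := cL_cut; have [_ [cRl _]] := cR_cut.
have lo_l : lo < l := leq_ltn_trans lo_hi hi_l.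
split; first by rewrite splice_colsL.
split; first by rewrite splice_colsR.
move=> t tl; case: (ltngtP t lo) => [tlo|lot|->].
- by rewrite !splice_colsL ?(ltnW tlo) //; apply: cL_step.
- case: (ltngtP t hi) => [thi|hit|tE].
  + rewrite !splice_colsM ?lot ?thi ?(ltnW thi) ?(ltn_trans lot) //.
    by have := nth_lt (t1 := t - lo) (t2 := t.+1 - lo) ltac:(lia).
  + rewrite !splice_colsR ?(ltnW hit) //; first exact: cR_step.
    exact: ltn_trans hit _.
  + subst t; rewrite splice_colsM ?lot ?leqnn // splice_colsR //.
    by have /andP[_ +] := nth_range (t := hi - lo) s_size; have := cR_step hi_l; lia.
- by rewrite splice_colsL //; have := cL_step lo_l; have := splice_cols_lo_succ; lia.
Qed.

Lemma splice_cols_left j b : j <= lo -> cL j <= b < cL j.+1 ->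
  splice_cols j <= b < splice_cols j.+1.
Proof.
rewrite leq_eqVlt => /orP[/eqP->|jlo]; last by rewrite !splice_colsL // ltnW.
by rewrite splice_colsL //; have := splice_cols_lo_succ; lia.
Qed.

Lemma splice_cols_right j b : hi <= j -> cR j <= b < cR j.+1 ->
  splice_cols j <= b < splice_cols j.+1.
Proof.
rewrite leq_eqVlt => /orP[/eqP<-|hij]; last by rewrite !splice_colsR // ltnW.
by rewrite (splice_colsR (j := hi.+1)) //; have := splice_cols_hi; lia.
Qed.

Lemma splice_cols_mid j : lo <= j <= hi ->
  splice_cols j <= nth 0 s (j - lo) < splice_cols j.+1.
Proof.
case/andP=> loj jhi; apply/andP; split.
- move: loj; rewrite leq_eqVlt => /orP[/eqP<-|loj]; last by rewrite splice_colsM ?loj.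
  rewrite splice_colsL // subnn; have := nth_range (t := 0) ltac:(lia).
  by have := cL_step (t := lo) ltac:(lia); lia.
- move: jhi; rewrite leq_eqVlt => /orP[/eqP->|jhi].
  + rewrite splice_colsR //; have := nth_range (t := hi - lo) s_size.
    by have := cR_step hi_l; lia.
  + rewrite splice_colsM ?jhi ?(leq_ltn_trans loj) //.
    by have := nth_lt (t1 := j - lo) (t2 := j.+1 - lo) ltac:(lia).
Qed.

End ColumnSplice.

Definition embedding k l m n (P : 'M[bool]_(k, l)) (M : 'M[bool]_(m, n)) (r c : nat -> nat) :=
  [/\ is_cut k m r, is_cut l n c & forall (i : 'I_k) (j : 'I_l), P i j ->
    exists (a : 'I_m) (b : 'I_n), [/\ r i <= a < r i.+1, c j <= b < c j.+1 & M a b]].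

Lemma containsP k l m n (P : 'M[bool]_(k, l)) (M : 'M[bool]_(m, n)) :
  contains P M <-> exists r c, embedding P M r c.
Proof. by split=> [[r [c [? [? ?]]]]|[r [c [? ? ?]]]]; exists r, c. Qed.

Lemma cut_two x m : 0 < x < m -> is_cut 2 m (nth m [:: 0; x]).
Proof. by move=> xm; split=> //; split=> // [[|[|]]] //= _; lia. Qed.

Lemma no_increasing_pair k l (P : 'M[bool]_(k, l)) (i1 i2 : 'I_k) (j1 j2 : 'I_l) :
  avoids D2 P -> P i1 j1 -> P i2 j2 -> i1 < i2 -> j1 < j2 -> False.
Proof.
move=> noD2 P11 P22 i12 j12; apply/noD2/containsP.
have i2k := ltn_ord i2; have j2l := ltn_ord j2.
exists (nth k [:: 0; i1.+1]), (nth l [:: 0; j1.+1]).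
split; [apply: cut_two; lia | apply: cut_two; lia |].
move=> [[|[|//]] ?] [[|[|//]] ?]; rewrite mxE //= => _.
- by exists i1, j1; rewrite P11; split=> //; lia.
- by exists i2, j2; rewrite P22; split=> //; lia.
Qed.

Section CriticalZeros.
Variables (k l m n : nat) (P : 'M[bool]_(k, l)) (M : 'M[bool]_(m, n)).

Lemma set_one_witness a z r c (i : 'I_k) (j : 'I_l) :
  embedding P (set_one M a z) r c -> P i j -> ~~ (r i <= a < r i.+1) ->
  exists (a' : 'I_m) (b' : 'I_n), [/\ r i <= a' < r i.+1, c j <= b' < c j.+1 & M a' b'].
Proof.
case=> _ _ emb Pij; have [a' [b' [ra' cb']]] := emb i j Pij.
rewrite mxE => /orP[Mab _|/andP[/eqP<- _]]; first by exists a', b'.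
by rewrite ra'.
Qed.

Definition zero_witness (a : 'I_m) (z : 'I_n) (i : 'I_k) (j : 'I_l) (r c : nat -> nat) :=
  [/\ embedding P (set_one M a z) r c, P i j, r i <= a < r i.+1, c j <= z < c j.+1 &
      forall b : 'I_n, c j <= b < c j.+1 -> M a b = false].

Lemma critical_zero_witness a z : critical P M -> M a z = false ->
  exists i j r c, zero_witness a z i j r c.
Proof.
case=> avoidPM crit Maz; have /containsP[r [c emb]] := crit a z Maz.
have [r_cut c_cut wit] := emb.
pose zero_block (i : 'I_k) (j : 'I_l) := [&& P i j, r i <= a < r i.+1, c j <= z < c j.+1 &
  [forall b : 'I_n, (c j <= b < c j.+1) ==> ~~ M a b]].
have [/existsP[i /existsP[j /and4P[Pij ai zj /forallP zero]]]|none] :=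
  boolP [exists i, exists j, zero_block i j].
  by exists i, j, r, c; split=> // b bj; apply/negbTE/(implyP (zero b)).
case: avoidPM; apply/containsP; exists r, c; split=> // i j Pij.
have [a' [b' [ai bj]]] := wit i j Pij.
rewrite mxE => /orP[Mab|/andP[/eqP aa /eqP bz]]; first by exists a', b'.
subst a' b'; have : ~~ [forall b : 'I_n, (c j <= b < c j.+1) ==> ~~ M a b].
  apply: contra none => zero; apply/existsP; exists i; apply/existsP; exists j.
  by rewrite /zero_block Pij ai bj.
by case/forallPn=> b; rewrite negb_imply negbK => /andP[bj' Mab]; exists a, b.
Qed.

Variable a : 'I_m.

Definition row_one (w : nat) := nth false [seq M a j | j <- enum 'I_n] w.

Lemma row_oneE (b : 'I_n) : row_one b = M a b.
Proof. by rewrite /row_one (nth_map b) ?size_enum_ord // nth_ord_enum. Qed.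

Lemma row_one_lt w : row_one w -> w < n.
Proof.
by rewrite /row_one; case: ltnP => // nw; rewrite nth_default // size_map size_enum_ord.
Qed.

Lemma row_one_notin_zero_block x y w : (forall b : 'I_n, x <= b < y -> M a b = false) ->
  row_one w -> ~~ (x <= w < y).
Proof.
move=> zero w1; apply/negP => xwy; have wn := row_one_lt w1.
by move: w1; rewrite -[w]/(val (Ordinal wn)) row_oneE zero.
Qed.

Section IncreasingPairFree.
Hypothesis P_noD2 : avoids D2 P.

Lemma contains_of_zero_witnesses zL zR i jL jR rL cL rR cR :
  zero_witness a zL i jL rL cL -> zero_witness a zR i jR rR cR -> zL < zR ->
  l <= count row_one (iota zL (zR - zL)) -> contains P M.
Proof.
move=> [embL PL aL zjL zeroL] [embR PR aR zjR zeroR] zLR ones.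
have [rL_cut cL_cut _] := embL; have [rR_cut cR_cut _] := embR.
have [lo Plo lo_min] : exists2 lo : 'I_l, P i lo & forall j, P i j -> lo <= j.
  by exists [arg min_(j < jL | P i j) (j : nat)]; case: arg_minnP.
have [hi Phi hi_max] : exists2 hi : 'I_l, P i hi & forall j, P i j -> j <= hi.
  by exists [arg max_(j > jR | P i j) (j : nat)]; case: arg_maxnP.
have lo_hi : lo <= hi := lo_min _ Phi.
set s := filter row_one (iota zL (zR - zL)).
have s_sorted : sorted ltn s := sorted_filter ltn_trans _ (iota_ltn_sorted _ _).
have s_size : hi - lo < size s by rewrite size_filter; have := ltn_ord hi; lia.
have s_range : forall w, w \in s -> cL lo.+1 <= w < cR hi.
  move=> w; rewrite mem_filter mem_iota subnKC ?(ltnW zLR) // => /andP[w1 /andP[zLw wzR]].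
  have := row_one_notin_zero_block zeroL w1; have := row_one_notin_zero_block zeroR w1.
  have := cut_le cL_cut (i := lo.+1) (j := jL.+1); have := lo_min _ PL; have := ltn_ord jL.
  have := cut_le cR_cut (i := jR) (j := hi); have := hi_max _ PR; have := ltn_ord hi.
  lia.
have cols := splice_cols_cut cL_cut cR_cut lo_hi (ltn_ord hi) s_sorted s_size s_range.
have cols_left := splice_cols_left cL_cut cR_cut lo_hi (ltn_ord hi) s_sorted s_size s_range.
have cols_right := splice_cols_right cL_cut cR_cut lo_hi (ltn_ord hi) s_sorted s_size s_range.
have cols_mid := splice_cols_mid cL_cut cR_cut lo_hi (ltn_ord hi) s_sorted s_size s_range.
apply/containsP; exists (splice rR rL i), (splice_cols lo hi cL cR s).
split=> //; first by apply: splice_cut => //; lia.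
move=> i1 j1 P1; case: (ltngtP i1 i) => [i1i|ii1|/val_inj i1i].
- have hi_j1 : hi <= j1.
    by rewrite leqNgt; apply/negP; exact: no_increasing_pair P_noD2 P1 Phi i1i.
  have [|a' [b' [ra' cb' Mab]]] := set_one_witness embR P1.
    by have := cut_le rR_cut (i := i1.+1) (j := i); have := ltn_ord i; lia.
  by exists a', b'; split=> //; [rewrite /splice (ltnW i1i) i1i | apply: cols_right].
- have j1_lo : j1 <= lo.
    by rewrite leqNgt; apply/negP; exact: no_increasing_pair P_noD2 Plo P1 ii1.
  have [|a' [b' [ra' cb' Mab]]] := set_one_witness embL P1.
    by have := cut_le rL_cut (i := i.+1) (j := i1); have := ltn_ord i1; lia.
  exists a', b'; split=> //; last by apply: cols_left.
  by rewrite /splice (leqNgt i1 i) ii1 (leqNgt i1.+1 i) ltnS (ltnW ii1).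
- subst i1; have /andP[lo_j1 j1_hi] : lo <= j1 <= hi by rewrite lo_min ?hi_max.
  have : nth 0 s (j1 - lo) \in s by apply/mem_nth/(leq_ltn_trans _ s_size)/leq_sub2r.
  rewrite mem_filter => /andP[w1 _]; exists a, (Ordinal (row_one_lt w1)); split.
  + by rewrite /splice leqnn ltnn; lia.
  + by apply: cols_mid; rewrite lo_j1.
  + by rewrite -row_oneE.
Qed.

Definition run_start (z : 'I_n) := ~~ M a z && ((val z == 0) || row_one z.-1).

Definition ones_before (z : nat) := count row_one (iota 0 z).

Lemma row_complexityE : row_complexity M a = count run_start (enum 'I_n).
Proof.
rewrite /row_complexity /zero_runs size_map size_enum_ord -val_enum_ord count_map.
by apply: eq_count => z /=; rewrite /run_start (nth_map z) ?size_enum_ord // nth_ord_enum.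
Qed.

Lemma ones_between_run_starts d (z1 z2 : 'I_n) : run_start z2 -> z1 < z2 ->
  ones_before z1 = ones_before z2 %[mod d] -> d <= count row_one (iota z1 (z2 - z1)).
Proof.
case/andP=> _ prev z12 eq_mod.
have ones_split : ones_before z2 = ones_before z1 + count row_one (iota z1 (z2 - z1)).
  by rewrite /ones_before -count_cat -iotaD subnKC // ltnW.
apply: (@leq_of_eqn_mod_add _ (ones_before z1)); last by rewrite -ones_split eq_mod.
rewrite -has_count; apply/hasP; exists z2.-1; first by rewrite mem_iota; lia.
have z2_pos : (val z2 == 0) = false by apply/negbTE; rewrite -lt0n (leq_ltn_trans _ z12).
by rewrite z2_pos in prev.
Qed.

Lemma row_complexity_le : critical P M -> row_complexity M a <= k * l.+1.
Proof.
move=> crit; rewrite row_complexityE -size_filter.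
have -> : k * l.+1 = #|{: 'I_k * 'I_l.+1}| by rewrite card_prod !card_ord.
pose label (z : 'I_n) (t : 'I_k * 'I_l.+1) :=
  (exists j r c, zero_witness a z t.1 j r c) /\ val t.2 = ones_before z %% l.+1.
apply: (@size_le_card_of_rel _ _ label); first by rewrite filter_uniq ?enum_uniq.
  move=> z; rewrite mem_filter => /andP[/andP[Mz _] _].
  have [i [j [r [c wit]]]] := critical_zero_witness crit (negbTE Mz).
  by exists (i, Ordinal (ltn_pmod (ones_before z) (ltn0Sn l))); split=> //; exists j, r, c.
move=> z1 z2 [i q]; rewrite !mem_filter => /andP[z1_start _] /andP[z2_start _].
move=> [[j1 [r1 [c1 wit1]]] q1] [[j2 [r2 [c2 wit2]]] q2].
have eq_mod : ones_before z1 = ones_before z2 %[mod l.+1] by rewrite -q1 -q2.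
case: (ltngtP z1 z2) => [z12|z21|/val_inj //]; case: (proj1 crit).
- by apply: (contains_of_zero_witnesses wit1 wit2 z12); apply/ltnW/ones_between_run_starts.
- by apply: (contains_of_zero_witnesses wit2 wit1 z21); apply/ltnW/ones_between_run_starts.
Qed.

End IncreasingPairFree.
End CriticalZeros.

Lemma row_bounded_of_avoidsD2 k l (P : 'M[bool]_(k, l)) : avoids D2 P -> row_bounded P.
Proof.
by move=> noD2; exists (k * l.+1) => m n M crit a; apply: row_complexity_le noD2 crit.
Qed.

Definition row_flip m n (M : 'M[bool]_(m, n)) : 'M[bool]_(m, n) :=
  \matrix_(i, j) M (rev_ord i) j.

Lemma row_flipK m n : involutive (@row_flip m n).
Proof. by move=> M; apply/matrixP => i j; rewrite !mxE rev_ordK. Qed.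

Lemma row_flip_D2 : row_flip D2 = D2bar.
Proof. by apply/matrixP => -[[|[|//]] ?] [[|[|//]] ?]; rewrite !mxE. Qed.

Lemma contains_row_flip k l m n (P : 'M[bool]_(k, l)) (M : 'M[bool]_(m, n)) :
  contains P M -> contains (row_flip P) (row_flip M).
Proof.
case/containsP=> r [c [r_cut c_cut wit]]; apply/containsP.
have r_le_m t : r (k - t) <= m by apply: (cut_le_top r_cut); rewrite leq_subr.
have r_step t : t < k -> r (k - t.+1) < r (k - t).
  by move=> tk; case: r_cut => _ [_ /(_ (k - t.+1))]; rewrite subnSK //; apply; lia.
exists (fun t => m - r (k - t)), c; split=> //.
  have [r0 [rk _]] := r_cut; split; first by rewrite subn0 rk subnn.
  by split=> [|t tk]; [rewrite subnn r0 subn0 | have := r_step t tk; have := r_le_m t; lia].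
move=> i j; rewrite mxE => Pij; have [a [b [ra cb Mab]]] := wit _ _ Pij.
exists (rev_ord a), b; rewrite mxE rev_ordK; split=> //=.
move: ra; rewrite /= -subSn // subSS; have := r_le_m i; have := ltn_ord a; lia.
Qed.

Lemma set_one_row_flip m n (M : 'M[bool]_(m, n)) a b :
  set_one (row_flip M) a b = row_flip (set_one M (rev_ord a) b).
Proof. by apply/matrixP => i j; rewrite !mxE (inj_eq rev_ord_inj). Qed.

Lemma critical_row_flip k l m n (P : 'M[bool]_(k, l)) (M : 'M[bool]_(m, n)) :
  critical P M -> critical (row_flip P) (row_flip M).
Proof.
case=> avoidPM crit; split=> [/contains_row_flip|a b]; first by rewrite !row_flipK.
by rewrite mxE set_one_row_flip => /crit /contains_row_flip.
Qed.

Lemma row_complexity_row_flip m n (M : 'M[bool]_(m, n)) a :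
  row_complexity (row_flip M) a = row_complexity M (rev_ord a).
Proof. by rewrite /row_complexity; congr zero_runs; apply: eq_map => j; rewrite mxE. Qed.

Lemma row_bounded_row_flip k l (P : 'M[bool]_(k, l)) :
  row_bounded (row_flip P) -> row_bounded P.
Proof.
case=> C bound; exists C => m n M /critical_row_flip crit a.
by rewrite -(rev_ordK a) -row_complexity_row_flip; apply: bound.
Qed.

Lemma avoids_row_flip_D2 k l (P : 'M[bool]_(k, l)) :
  avoids D2bar P -> avoids D2 (row_flip P).
Proof. by move=> noD2bar /contains_row_flip; rewrite row_flip_D2 row_flipK. Qed.

Theorem lemma3p16 (k l : nat) (P : 'M[bool]_(k, l)) :
  avoids D2 P \/ avoids D2bar P -> row_bounded P.
Proof.
case=> [noD2|noD2bar]; first exact: row_bounded_of_avoidsD2.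
by apply/row_bounded_row_flip/row_bounded_of_avoidsD2/avoids_row_flip_D2.
Qed.
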